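(* Let $G$ be a connected edge-square finite simple graph of order $p$ and size $q$, with normal graph algebra $\mathcal{N}G$ over a field $\mathbb{F}$ of characteristic not $2$. Then $q=p-1$ or $q=p$, and: (1) if $q=p-1$, then $\mathcal{N}G$ is isomorphic (as a normal algebra) to $\mathbb{F}^0\oplus\mathcal{O}_{p-1}$, $\dim\mathrm{ann}\,G=1$, and $G$ is a tree; (2) if $q=p$, then $\mathcal{N}G$ is isomorphic to $\mathcal{O}_p$, $\dim\mathrm{ann}\,G=0$, and $G$ is unicyclic with an odd cycle.
   Context: A normal algebra is a finite-dimensional $\mathbb{F}$-vector space $\mathcal{N}=U\oplus\mathfrak{Z}$ with a commutative bilinear product such that $U\mathfrak{Z}=0$, $\mathfrak{Z}\mathfrak{Z}=0$, $UU\subseteq\mathfrak{Z}$; an isomorphism of normal algebras is a product-preserving linear bijection mapping $U$ onto $U'$ and $\mathfrak{Z}$ onto $\mathfrak{Z}'$; direct sums are taken componentwise. For a finite simple graph $G$ with vertex set $VG$ ($p=|VG|$) and edge set $EG$ ($q=|EG|$), the normal graph algebra $\mathcal{N}G$ has $U=U_G$ with basis $VG$ and $\mathfrak{Z}=\mathfrak{Z}_G$ with basis $EG$ (edge with endpoints $x,y$ written $[x,y]$), with product determined by: for distinct vertices $x,y$, $xy=[x,y]$ if adjacent and $0$ otherwise; $x^2=\sum_{y\sim x}[x,y]$. $G$ is edge-square if for every edge $\mathfrak{e}$ there is $u\in U_G$ with $u^2=\mathfrak{e}$. $\mathrm{ann}\,G=\{u\in U_G: uU_G=0\}$. $\mathbb{F}^0$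 is the normal algebra with $U=\mathbb{F}$, $\mathfrak{Z}=0$ and all products $0$. For $n\ge0$, $\mathcal{O}_n$ is the normal algebra with $U=\langle w_1,\dots,w_n\rangle$, $\mathfrak{Z}=\langle\mathfrak{z}_1,\dots,\mathfrak{z}_n\rangle$ (bases), $w_i^2=\mathfrak{z}_i$, $w_iw_j=0$ for $i\ne j$, and all other basis products $0$. A unicyclic graph is a connected graph with exactly one cycle. *)

From HB Require Import structures.
From mathcomp Require Import all_boot all_order all_algebra.
Set Implicit Arguments. Unset Strict Implicit. Unset Printing Implicit Defensive.
Import GRing.Theory.
Local Open Scope ring_scope.

(* A normal algebra N = U (+) Z, with U = F^dimU and Z = F^dimZ given in
   coordinates, and the (commutative, bilinear) product U x U -> Z; all other
   products (involving Z) are zero, so the algebra is determined by nmul. *)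
Record nalg (F : fieldType) := NAlg {
  dimU : nat;
  dimZ : nat;
  nmul : 'rV[F]_dimU -> 'rV[F]_dimU -> 'rV[F]_dimZ }.

Definition lin_map (F : fieldType) n m (f : 'rV[F]_n -> 'rV[F]_m) : Prop :=
  forall (a : F) u v, f (a *: u + v) = a *: f u + f v.

Definition nalg_iso (F : fieldType) (A B : nalg F) : Prop :=
  exists (f : 'rV[F]_(dimU A) -> 'rV[F]_(dimU B))
         (g : 'rV[F]_(dimZ A) -> 'rV[F]_(dimZ B)),
    [/\ lin_map f, lin_map g, bijective f, bijective g &
        forall u v, g (@nmul F A u v) = @nmul F B (f u) (f v)].

Definition dsum (F : fieldType) (A B : nalg F) : nalg F :=
  @NAlg F (dimU A + dimU B) (dimZ A + dimZ B)
    (fun u v => row_mx (@nmul F A (lsubmx u) (lsubmx v))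
                       (@nmul F B (rsubmx u) (rsubmx v))).

Definition F0 (F : fieldType) : nalg F := @NAlg F 1 0 (fun _ _ => 0).

(* O_n : w_i^2 = z_i, w_i w_j = 0 (i <> j), extended bilinearly *)
Definition Oalg (F : fieldType) (n : nat) : nalg F :=
  @NAlg F n n (fun u v => \row_i (u 0 i * v 0 i)).

Definition simple_graph (T : finType) (e : rel T) : Prop :=
  irreflexive e /\ symmetric e.

Definition edges (T : finType) (e : rel T) : {set {set T}} :=
  [set [set p.1; p.2] | p in [set p : T * T | e p.1 p.2]].

Section GraphAlgebra.
Variables (F : fieldType) (T : finType) (e : rel T).

Definition edg (s : {set T}) : 'rV[F]_#|edges e| :=
  \row_k ((enum_val k == s)%:R).

Definition bprod (x y : T) : 'rV[F]_#|edges e| :=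
  if x == y then \sum_(y' | e x y') edg [set x; y']
  else if e x y then edg [set x; y] else 0.

(* coordinates of u in U_G: u 0 (enum_rank x) is the coefficient of vertex x *)
Definition gmul (u v : 'rV[F]_#|T|) : 'rV[F]_#|edges e| :=
  \sum_x \sum_y (u 0 (enum_rank x) * v 0 (enum_rank y)) *: bprod x y.

Definition NG : nalg F := @NAlg F #|T| #|edges e| gmul.

Definition edge_square : Prop :=
  forall s, s \in edges e -> exists u, gmul u u = edg s.

Definition ann (u : 'rV[F]_#|T|) : Prop := forall v, gmul u v = 0.

End GraphAlgebra.
Arguments ann F [T] e u%_ring_scope.
Arguments gmul F [T] e u%_ring_scope v%_ring_scope.

Definition has_dim (F : fieldType) n (P : 'rV[F]_n -> Prop) (d : nat) : Prop :=
  exists A : 'M[F]_(d, n), row_free A /\ forall u, P u <-> (u <= A)%MS.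

Section GraphNotions.
Variables (T : finType) (e : rel T).

Definition gconnected : Prop := forall x y, connect e x y.

Definition is_cycle (c : seq T) : Prop := [/\ 3 <= size c, uniq c & cycle e c]%N.

Definition cycle_edges (c : seq T) : {set {set T}} :=
  [set [set x; next c x] | x in c].

Definition is_tree : Prop := gconnected /\ forall c, ~ is_cycle c.

(* exactly one cycle (cycles identified by their edge sets) *)
Definition unicyclic : Prop :=
  gconnected /\ exists c, is_cycle c /\
    forall c', is_cycle c' -> cycle_edges c' = cycle_edges c.

End GraphNotions.

From mathcomp Require Import all_boot all_order all_algebra.
From mathcomp Require Import zify.
Set Implicit Arguments. Unset Strict Implicit. Unset Printing Implicit Defensive.
Import GRing.Theory.
Local Open Scope ring_scope.

(* Let M be the vertex-edge incidence matrix of G.  The product of NG is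
   u v = (u M) .* (v M) (entrywise), so NG is the pullback of O_q along
   u |-> u M.  If u^2 = [x, y], then u M is +-1 at [x, y] and 0 elsewhere;
   hence M has rank q, ann G = ker M, and NG is isomorphic to O_p or to
   F^0 (+) O_(p-1) according as ker M is 0 or a line.  A vector of ker M
   changes sign along every edge, so dim ker M <= 1 by connectedness.
   A weight w with w M = [x, y] changes sign along every walk avoiding the
   edge xy: running around a cycle through xy shows that the cycle is odd and
   that w x = w y = 1/2.  Hence a cycle kills ker M (a vector changing sign
   around an odd cycle vanishes), while ker M = 0 rules out a 2-colouring and
   so produces an odd cycle.  Finally, if the edge xy of a cycle were missing
   from another cycle C', then w^2 would be a nonzero constant, yet w
   vanishes on the odd cycle C'. *)

Section OalgPullback.
Variable F : fieldType.

Lemma lin_map_mulmx n m (A : 'M[F]_(n, m)) : lin_map (mulmx^~ A).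
Proof. by move=> a u v; rewrite mulmxDl scalemxAl. Qed.

Lemma nalg_iso_Oalg n m (M : 'M[F]_(n, m)) (mul : 'rV[F]_n -> 'rV[F]_n -> 'rV[F]_m) :
  m = n -> row_full M ->
  (forall u v, mul u v = @nmul F (Oalg F m) (u *m M) (v *m M)) ->
  nalg_iso (NAlg mul) (Oalg F n).
Proof.
move=> mn M_full mulE; subst m; move: M_full; rewrite row_full_unit => M_unit.
exists (mulmx^~ M), id; split => //=.
- exact: lin_map_mulmx.
- by exists (mulmx^~ (invmx M)) => u; [rewrite mulmxK | rewrite mulmxKV].
- by exists id.
Qed.

Lemma row_mx_unitmx m (M : 'M[F]_(m.+1, m)) :
  row_full M -> exists c : 'cV[F]_m.+1, row_mx c M \in unitmx.
Proof.
move=> M_full.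
have rank_ker : \rank (kermx M) = 1%N by rewrite mxrank_ker (eqP M_full) subSnn.
have /rowV0Pn[w w_ker w_neq0] : kermx M != 0 by rewrite -mxrank_eq0 rank_ker.
have ker_w : (kermx M <= w)%MS.
  by rewrite -(geq_leqif (mxrank_leqif_sup w_ker)) rank_ker rank_rV w_neq0.
(* [ker M] is the line spanned by [w]; any coordinate column on which [w] is
   nonzero completes [M] to an invertible matrix. *)
have /rV0Pn[i wi_neq0] := w_neq0.
exists (delta_mx i 0); rewrite -row_free_unit; apply: inj_row_free => v.
move=> vN0; have /eq_row_mx[vc0 vM0] :
    row_mx (v *m delta_mx i 0) (v *m M) = row_mx (0 : 'rV_1) (0 : 'rV_m).
  by rewrite row_mx0 -mul_mx_row.
have /sub_rVP[a va] : (v <= w)%MS by rewrite (submx_trans _ ker_w) // sub_kermx vM0.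
subst v; move/rowP/(_ 0): vc0; rewrite -scalemxAl -colE !mxE => /eqP.
by rewrite mulf_eq0 (negbTE wi_neq0) orbF => /eqP->; rewrite scale0r.
Qed.

Lemma nalg_iso_F0_Oalg n m (M : 'M[F]_(n, m)) (mul : 'rV[F]_n -> 'rV[F]_n -> 'rV[F]_m) :
  n = m.+1 -> row_full M ->
  (forall u v, mul u v = @nmul F (Oalg F m) (u *m M) (v *m M)) ->
  nalg_iso (NAlg mul) (dsum (F0 F) (Oalg F n.-1)).
Proof.
move=> en M_full mulE; subst n; have [c N_unit] := row_mx_unitmx M_full.
exists (mulmx^~ (row_mx c M)), (row_mx (0 : 'rV_0)); split => /=.
- exact: lin_map_mulmx.
- by move=> a u v; rewrite scale_row_mx add_row_mx scaler0 addr0.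
- by exists (mulmx^~ (invmx (row_mx c M))) => u; [rewrite mulmxK | rewrite mulmxKV].
- exists rsubmx => z; first by rewrite row_mxKr.
  by rewrite -[RHS]hsubmxK (thinmx0 (lsubmx z)).
- by move=> u v; rewrite mulE !mul_mx_row !row_mxKr.
Qed.

Lemma has_dim_kermx n m (M : 'M[F]_(n, m)) (P : 'rV[F]_n -> Prop) :
  (forall u, P u <-> u *m M = 0) -> has_dim P (\rank (kermx M)).
Proof.
move=> PE; exists (row_base (kermx M)); split; first exact: row_base_free.
by move=> u; rewrite PE eq_row_base sub_kermx; split => [->|/eqP].
Qed.

End OalgPullback.

Lemma sub_path_belast (T : Type) (P : pred T) (r r' : rel T) x s :
  (forall a b, P a -> r a b -> r' a b) -> all P (belast x s) ->
  path r x s -> path r' x s.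
Proof.
move=> rr'; elim: s x => //= y s IHs x /andP[Px Ps] /andP[rxy rs].
by rewrite rr' // IHs.
Qed.

Lemma path_opp_last (T : Type) (R : pzRingType) (w : T -> R) x s :
  path [rel a b | w a + w b == 0] x s -> w (last x s) = (-1) ^+ size s * w x.
Proof.
elim: s x => [|y s IHs] x /=; first by rewrite mul1r.
case/andP=> /eqP/addr0_eq wy /IHs->.
by rewrite -wy exprSr -mulrA mulN1r.
Qed.

Lemma cycle_opp_odd_eq0 (T : Type) (R : idomainType) (w : T -> R) x s :
  (2%:R : R) != 0 -> cycle [rel a b | w a + w b == 0] (x :: s) ->
  odd (size (x :: s)) -> w x = 0.
Proof.
move=> two_neq0 x_cycle s_odd.
have := path_opp_last x_cycle; rewrite last_rcons size_rcons -signr_odd s_odd.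
rewrite expr1 mulN1r => wx_opp.
have : w x * 2%:R == 0 by rewrite mulr_natr mulr2n {1}wx_opp addNr.
by rewrite mulf_eq0 (negbTE two_neq0) orbF => /eqP.
Qed.

Lemma not_uniq_split (T : eqType) (s : seq T) :
  ~~ uniq s -> exists z s1 s2 s3, s = s1 ++ z :: s2 ++ z :: s3.
Proof.
elim: s => //= x s IHs; rewrite negb_and negbK => /orP[/splitPr[s2 s3] | /IHs].
  by exists x, [::], s2, s3.
by case=> z [s1 [s2 [s3 ->]]]; exists z, (x :: s1), s2, s3.
Qed.

Lemma cycle_split (T : eqType) (e : rel T) z s1 s2 :
  cycle e (z :: s1 ++ z :: s2) = cycle e (z :: s1) && cycle e (z :: s2).
Proof. by rewrite /= rcons_cat cat_path /= !rcons_path !andbA. Qed.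

Section VertexWeights.
Variables (T : finType) (e : rel T).
Hypothesis sym_e : symmetric e.

Definition alternating (R : zmodType) (w : T -> R) : Prop :=
  forall a b, e a b -> w a + w b = 0.

(* The incidence matrix maps [w] to the basis vector of the edge [s]. *)
Definition incidence_preimage (R : nzSemiRingType) (w : T -> R) (s : {set T}) : Prop :=
  forall a b, e a b -> w a + w b = ([set a; b] == s)%:R.

Lemma alternating_eq0 (R : zmodType) (w : T -> R) x z :
  gconnected e -> alternating w -> w x = 0 -> w z = 0.
Proof.
move=> e_conn w_alt wx0; apply/eqP.
have w0_closed : closed e [pred a | w a == 0].
  by move=> a b /w_alt/addr0_eq wb; rewrite !inE -wb oppr_eq0.
by have := closed_connect w0_closed (e_conn x z); rewrite !inE wx0 eqxx => <-.
Qed.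

Lemma incidence_preimage_cycle (R : nzRingType) (w : T -> R) c x :
  is_cycle e c -> x \in c -> incidence_preimage w [set x; next c x] ->
  odd (size c) /\ w x = w (next c x).
Proof.
move=> [c_ge3 c_uniq c_cycle] xc; have [i s c_rot] := rot_to xc.
have -> : next c x = next (x :: s) x by rewrite -c_rot next_rot.
have -> : size c = size (x :: s) by rewrite -c_rot size_rot.
have : [&& 3 <= size (x :: s), uniq (x :: s) & cycle e (x :: s)]%N.
  by rewrite -c_rot size_rot rot_uniq rot_cycle c_ge3 c_uniq.
case: s {c_rot c_ge3 c_uniq c_cycle xc} => [|y [|z t]] //=.
case/and4P=> /and4P[x_notin y_notin _ _] exy eyz zpath; rewrite eqxx negbK => w_pre.
have w_opp a b : e a b -> a \notin [set x; y] -> w a + w b == 0.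
  move=> eab a_notin; rewrite w_pre //; case: ([set a; b] =P [set x; y]) => // ab_xy.
  by rewrite -ab_xy set21 in a_notin.
have zt_notin : all [predC [set x; y]] (z :: t).
  apply/allP => a a_zt; rewrite !inE negb_or; apply/andP; split.
    by apply: contraNneq x_notin => <-; rewrite inE a_zt orbT.
  by apply: contraNneq y_notin => <-.
have y_path : path [rel a b | w a + w b == 0] y (z :: rcons t x).
  have ezy : e z y by rewrite sym_e.
  rewrite /= addrC (w_opp z y ezy (allP zt_notin z (mem_head z t))) /=.
  apply: (sub_path_belast (P := [predC [set x; y]]) _ _ zpath); rewrite ?belast_rcons //.
  by move=> a b a_notin eab; exact: w_opp eab a_notin.
have := path_opp_last y_path; rewrite /= last_rcons size_rcons -signr_odd /=.
have := w_pre x y exy; rewrite eqxx.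
case: (odd (size t)) => /= [wxy|_]; last by rewrite expr0 mul1r.
by rewrite expr1 mulN1r => wx; move/eqP: wxy; rewrite wx addNr eq_sym oner_eq0.
Qed.

Lemma odd_cycle_of_closed_walk s : irreflexive e -> cycle e s -> odd (size s) ->
  exists c, is_cycle e c /\ odd (size c).
Proof.
move=> irr_e; have [n] := ubnP (size s); elim: n => // n IHn in s *.
rewrite ltnS => s_le s_cycle s_odd.
have [s_uniq | /not_uniq_split[z [s1 [s2 [s3 s_eq]]]]] := boolP (uniq s).
  exists s; split => //; split => //.
  by case: s s_cycle s_odd {IHn s_le s_uniq} => [|x [|y [|z t]]] //=; rewrite irr_e.
have : cycle e (z :: s2 ++ z :: s3 ++ s1).
  by rewrite -(rot_cycle (size s1)) s_eq rot_size_cat /= -catA in s_cycle.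
rewrite cycle_split => /andP[cycle2 cycle31].
have size_s : size s = ((size s2).+1 + (size (s3 ++ s1)).+1)%N.
  by rewrite s_eq !size_cat /= !size_cat /=; lia.
have [odd2 | even2] := boolP (odd (size (z :: s2))).
  by apply: (IHn _ _ cycle2 odd2); move: s_le; rewrite size_s /=; lia.
apply: (IHn _ _ cycle31); first by move: s_le; rewrite size_s /=; lia.
by move: s_odd; rewrite size_s oddD (negbTE even2).
Qed.

Definition double_cover : rel (T * bool) :=
  [rel p q | e p.1 q.1 && (q.2 == ~~ p.2)].

Lemma double_cover_sym : symmetric double_cover.
Proof. by move=> [a b] [c d]; rewrite /double_cover /= sym_e; case: b; case: d. Qed.

Lemma path_double_cover a b p : path double_cover (a, b) p ->
  path e a (map fst p) /\ (last (a, b) p).2 = odd (size p) (+) b.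
Proof.
elim: p a b => [|[c d] p IHp] a b //= /andP[/andP[eac /eqP/= ->] /IHp[c_path ->]].
by rewrite eac c_path addbN addNb.
Qed.

Lemma bipartite_or_odd_cycle (R : pzRingType) x0 :
  irreflexive e -> gconnected e ->
  (exists c, is_cycle e c /\ odd (size c)) \/
  (exists chi : T -> R, chi x0 = 1 /\ alternating chi).
Proof.
move=> irr_e e_conn; pose side z b := connect double_cover (x0, false) (z, b).
have side_step a b bb : e a b -> side a bb -> side b (~~ bb).
  move=> eab side_a; apply: connect_trans side_a (connect1 _).
  by rewrite /double_cover /= eab eqxx.
have [|one_side] := boolP [exists z, side z false && side z true].
  case/existsP=> z /andP[z_false z_true]; left.
  have : connect double_cover (z, false) (z, true).
    by apply: connect_trans z_true; rewrite (sym_connect_sym double_cover_sym).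
  case/connectP=> p p_path p_last; have [z_path] := path_double_cover p_path.
  rewrite -p_last addbF => p_odd.
  have walk_closed : cycle e (map fst p).
    rewrite (cycle_path z) -[z in last z _]/(z, false).1 last_map -p_last.
    exact: z_path.
  by apply: (odd_cycle_of_closed_walk irr_e walk_closed); rewrite size_map -p_odd.
right; exists (fun z => if side z false then 1 else -1); split.
  by rewrite /side connect0.
have side_closed : closed e [pred z | side z false || side z true].
  apply: (intro_closed (sym_connect_sym sym_e)) => a b eab.
  by rewrite !inE => /orP[] /(side_step _ _ _ eab)->; rewrite ?orbT.
have side_any z : side z false || side z true.
  by have := closed_connect side_closed (e_conn x0 z); rewrite !inE /side connect0 => <-.
move/existsPn: one_side => one_side a b eab.
have [side_a | /negbTE side_a] := boolP (side a false).
  have side_b := side_step a b false eab side_a.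
  by move: (one_side b); rewrite side_b andbT => /negbTE->; rewrite subrr.
have := side_any a; rewrite side_a /= => /(side_step a b true eab) side_b.
by rewrite side_b addNr.
Qed.

End VertexWeights.

Section IncidenceMatrix.
Variables (F : fieldType) (T : finType) (e : rel T).
Hypotheses (irr_e : irreflexive e) (sym_e : symmetric e).

Definition vcoord (u : 'rV[F]_#|T|) (x : T) : F := u 0 (enum_rank x).

Definition vrow (w : T -> F) : 'rV[F]_#|T| := \row_i w (enum_val i).

Definition incidence : 'M[F]_(#|T|, #|edges e|) :=
  \matrix_(i, k) ((enum_val i : T) \in (enum_val k : {set T}))%:R.

Lemma vcoord_vrow w x : vcoord (vrow w) x = w x.
Proof. by rewrite /vcoord mxE enum_rankK. Qed.

Lemma vcoord_eq0 u : (forall x, vcoord u x = 0) -> u = 0.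
Proof.
by move=> u0; apply/rowP => i; rewrite mxE -(u0 (enum_val i)) /vcoord enum_valK.
Qed.

Lemma edges_pair s : s \in edges e -> exists a b, e a b /\ s = [set a; b].
Proof. by case/imsetP => -[a b]; rewrite inE => eab ->; exists a, b. Qed.

Lemma mem_edges a b : e a b -> [set a; b] \in edges e.
Proof. by move=> eab; apply/imsetP; exists (a, b); rewrite ?inE. Qed.

Lemma edge_neq a b : e a b -> a != b.
Proof. by apply: contraTneq => ->; rewrite irr_e. Qed.

Lemma eq_edge a b x y : e a b -> e x y ->
  ([set a; b] == [set x; y]) = (x \in [set a; b]) && (y \in [set a; b]).
Proof.
move=> eab exy; rewrite eq_sym eqEcard !cards2 (edge_neq eab) (edge_neq exy).
by rewrite subUset !sub1set andbT.
Qed.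

Lemma sum_edge (V : nmodType) (f : T -> V) a b :
  e a b -> \sum_(x in [set a; b]) f x = f a + f b.
Proof. by move=> /edge_neq ab; rewrite big_setU1 ?inE // big_set1. Qed.

Lemma mul_incidence u k : (u *m incidence) 0 k = \sum_(x in enum_val k) vcoord u x.
Proof.
rewrite mxE [RHS](reindex _ (onW_bij _ (@enum_val_bij T))) [RHS]big_mkcond /=.
by apply: eq_bigr => i _; rewrite mxE /vcoord enum_valK; case: ifP; rewrite ?mulr1 ?mulr0.
Qed.

Lemma mul_incidence_edge u a b (eab : e a b) :
  (u *m incidence) 0 (enum_rank_in (mem_edges eab) [set a; b]) = vcoord u a + vcoord u b.
Proof. by rewrite mul_incidence enum_rankK_in ?sum_edge ?mem_edges. Qed.

Lemma bprodE x y k :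
  (bprod F e x y) 0 k = ((x \in enum_val k) && (y \in enum_val k))%:R.
Proof.
have [a [b [eab k_ab]]] := edges_pair (enum_valP k).
rewrite /bprod; case: eqP => [<- | /eqP x_neq_y].
  rewrite summxE andbb; have [x_in | x_notin] := boolP (x \in enum_val k); last first.
    rewrite big1 // => z _; rewrite mxE; case: eqP => // k_xz.
    by rewrite k_xz set21 in x_notin.
  have [z [exz k_xz]] : exists z, e x z /\ enum_val k = [set x; z].
    move: x_in; rewrite k_ab => /set2P[]->; first by exists b.
    by exists a; rewrite sym_e setUC.
  rewrite (bigD1 z) //= mxE k_xz eqxx big1 ?addr0 // => z' /andP[exz' z'_neq_z].
  rewrite mxE k_xz eq_edge // !inE (negbTE z'_neq_z) [z' == x]eq_sym.
  by rewrite (negbTE (edge_neq exz')) /= andbF.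
case exy: (e x y); rewrite mxE; first by rewrite k_ab eq_edge // -k_ab.
rewrite k_ab; case: (boolP (_ && _)) => // /andP[/set2P x_ab /set2P y_ab].
by case: x_ab y_ab x_neq_y exy => -> [] ->; rewrite ?eqxx ?(sym_e b) ?eab.
Qed.

Lemma gmulE u v :
  gmul F e u v = @nmul F (Oalg F #|edges e|) (u *m incidence) (v *m incidence).
Proof.
apply/rowP => k; rewrite summxE /= mxE !mul_incidence big_distrl /= [RHS]big_mkcond /=.
apply: eq_bigr => x _; rewrite summxE; have [x_in | x_notin] := boolP (x \in enum_val k).
  rewrite big_distrr /= [RHS]big_mkcond /=; apply: eq_bigr => y _.
  by rewrite mxE bprodE x_in /=; case: (y \in _); rewrite ?mulr1 ?mulr0.
by rewrite big1 // => y _; rewrite mxE bprodE (negbTE x_notin) mulr0.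
Qed.

Lemma edge_square_preimage s : edge_square F e -> s \in edges e ->
  exists w : T -> F, incidence_preimage e w s.
Proof.
move=> e_sq s_edge; have [u u2] := e_sq s s_edge.
have incidence_sq a b (eab : e a b) :
    (vcoord u a + vcoord u b) ^+ 2 = ([set a; b] == s)%:R.
  move/rowP/(_ (enum_rank_in (mem_edges eab) [set a; b])): u2.
  rewrite gmulE [in X in X = _]mxE !mul_incidence_edge [in X in _ = X]mxE.
  by rewrite enum_rankK_in ?mem_edges // => <-; rewrite expr2.
have [a0 [b0 [eab0 s_ab]]] := edges_pair s_edge.
pose c := \sum_(x in s) vcoord u x.
have c_edge a b : e a b -> [set a; b] = s -> vcoord u a + vcoord u b = c.
  by move=> eab ab_s; rewrite /c -ab_s sum_edge.
have c2 : c * c = 1 by rewrite -expr2 -(c_edge a0 b0) // incidence_sq // s_ab eqxx.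
exists (fun x => c * vcoord u x) => a b eab; rewrite -mulrDr.
have [ab_s | ab_neq_s] := eqVneq [set a; b] s; first by rewrite c_edge // c2.
move: (incidence_sq a b eab); rewrite (negbTE ab_neq_s) => /eqP.
by rewrite expf_eq0 => /eqP->; rewrite mulr0.
Qed.

Lemma incidence_row_full : edge_square F e -> row_full incidence.
Proof.
move=> e_sq; rewrite -sub1mx; apply/row_subP => k.
have [w w_pre] := edge_square_preimage e_sq (enum_valP k).
suff -> : row k 1%:M = vrow w *m incidence by rewrite submxMl.
apply/rowP => k'; rewrite mul_incidence !mxE.
have [a [b [eab k'_ab]]] := edges_pair (enum_valP k').
rewrite (eq_bigr w) => [|x _]; last exact: vcoord_vrow.
by rewrite k'_ab sum_edge // w_pre // -k'_ab (inj_eq enum_val_inj) eq_sym.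
Qed.

Lemma mul_incidence_eq0 u : u *m incidence = 0 <-> alternating e (vcoord u).
Proof.
split=> [u0 a b eab | u_alt].
  move/rowP/(_ (enum_rank_in (mem_edges eab) [set a; b])): u0.
  by rewrite mul_incidence_edge mxE.
apply/rowP => k; rewrite mul_incidence mxE.
by have [a [b [eab ->]]] := edges_pair (enum_valP k); rewrite sum_edge ?u_alt.
Qed.

Lemma ann_incidence u : row_full incidence -> ann F e u <-> u *m incidence = 0.
Proof.
move=> /row_fullP[B B_inv]; split => [u_ann | u0 v]; last first.
  by apply/rowP => k; rewrite gmulE mxE u0 !mxE mul0r.
apply/rowP => k; move/rowP/(_ k): (u_ann (row k B)).
by rewrite gmulE mxE -row_mul B_inv !mxE eqxx mulr1.
Qed.

Lemma rank_kermx_incidence : gconnected e -> (\rank (kermx incidence) <= 1)%N.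
Proof.
move=> e_conn; have [x0 _ | T0] := pickP T; last first.
  by rewrite (leq_trans (rank_leq_col _)) // (eq_card0 T0).
pose d : 'cV[F]_#|T| := delta_mx (enum_rank x0) 0.
rewrite -(mxrank_mul_ker _ d).
suff -> : \rank (kermx incidence :&: kermx d)%MS = 0%N by rewrite addn0 rank_leq_col.
apply/eqP; rewrite mxrank_eq0; apply/rowV0P => v.
rewrite sub_capmx !sub_kermx => /andP[/eqP/mul_incidence_eq0 v_alt /eqP vd0].
apply: vcoord_eq0 => x; apply: (alternating_eq0 (x := x0)) e_conn v_alt _.
by move/rowP/(_ 0): vd0; rewrite -colE !mxE.
Qed.

Lemma odd_cycle_of_kermx_incidence (x0 : T) : gconnected e ->
  kermx incidence = 0 -> exists c, is_cycle e c /\ odd (size c).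
Proof.
move=> e_conn ker0.
case: (bipartite_or_odd_cycle sym_e F x0 irr_e e_conn) => // -[chi [chi1 chi_alt]].
have : vrow chi *m incidence = 0.
  by apply/mul_incidence_eq0 => a b eab; rewrite !vcoord_vrow chi_alt.
move/eqP; rewrite -sub_kermx ker0 submx0 => /eqP chi0.
move: chi1; rewrite -(vcoord_vrow chi x0) chi0 /vcoord mxE => /eqP.
by rewrite eq_sym oner_eq0.
Qed.

End IncidenceMatrix.

Section EdgeSquareGraph.
Variables (F : fieldType) (T : finType) (e : rel T).
Hypotheses (irr_e : irreflexive e) (sym_e : symmetric e) (e_sq : edge_square F e).
Hypotheses (two_neq0 : (2%:R : F) != 0) (e_conn : gconnected e).

Lemma edge_square_cycle_odd c : is_cycle e c -> odd (size c).
Proof.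
case: c => [[]//|x s] c_cycle; have [_ _ c_cyc] := c_cycle.
have x_in := mem_head x s; have exy := next_cycle c_cyc x_in.
have [w w_pre] := edge_square_preimage irr_e sym_e e_sq (mem_edges exy).
by have [] := incidence_preimage_cycle sym_e c_cycle x_in w_pre.
Qed.

Lemma alternating_cycle_eq0 (w : T -> F) c z :
  is_cycle e c -> alternating e w -> w z = 0.
Proof.
case: c => [[]//|x s] c_cycle w_alt; have [_ _ c_cyc] := c_cycle.
have wx0 : w x = 0.
  apply: (cycle_opp_odd_eq0 two_neq0 _ (edge_square_cycle_odd c_cycle)).
  by apply: sub_cycle c_cyc => a b /w_alt/eqP.
exact: alternating_eq0 e_conn w_alt wx0.
Qed.

Lemma kermx_incidence_cycle c : is_cycle e c -> kermx (incidence F e) = 0.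
Proof.
move=> c_cycle; apply/eqP/rowV0P => v.
rewrite sub_kermx => /eqP/(mul_incidence_eq0 irr_e) v_alt.
by apply: vcoord_eq0 => z; apply: alternating_cycle_eq0 c_cycle v_alt.
Qed.

Lemma cycle_edges_sub c c' : is_cycle e c -> is_cycle e c' ->
  cycle_edges c \subset cycle_edges c'.
Proof.
move=> c_cycle c'_cycle; have [_ _ c_cyc] := c_cycle.
apply/subsetP => _ /imsetP[x x_in ->]; apply/negPn/negP => xy_notin.
have exy := next_cycle c_cyc x_in; set y := next c x in exy xy_notin.
have [w w_pre] := edge_square_preimage irr_e sym_e e_sq (mem_edges exy).
have [_ wxy] := incidence_preimage_cycle sym_e c_cycle x_in w_pre; rewrite -/y in wxy.
have wx_neq0 : w x != 0.
  apply/eqP => wx0; move: (w_pre x y exy).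
  by rewrite eqxx -wxy wx0 addr0 => /eqP; rewrite eq_sym oner_eq0.
have sq_edge a b : e a b -> w a ^+ 2 = w b ^+ 2.
  move=> eab; have := w_pre a b eab.
  have [ab_xy _ | _ /addr0_eq <-] := eqVneq [set a; b] [set x; y]; last by rewrite sqrrN.
  have /andP[] : (a \in [set x; y]) && (b \in [set x; y]) by rewrite -ab_xy set21 set22.
  by case/set2P=> -> /set2P[]->; rewrite -?wxy.
have sq_const z : w z ^+ 2 = w x ^+ 2.
  have sq_closed : closed e [pred a | w a ^+ 2 == w x ^+ 2].
    by move=> a b /sq_edge; rewrite !inE => ->.
  by apply/eqP; have := closed_connect sq_closed (e_conn x z); rewrite !inE eqxx => <-.
case: c' c'_cycle xy_notin => [[]//|z s] c'_cycle xy_notin.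
have [_ c'_uniq c'_cyc] := c'_cycle.
have wz0 : w z = 0.
  apply: (cycle_opp_odd_eq0 two_neq0 _ (edge_square_cycle_odd c'_cycle)).
  apply: cycle_from_next => // a a_in; rewrite /= w_pre ?(next_cycle c'_cyc) //.
  case: (_ =P [set x; y]) => // a_xy; case/negP: xy_notin; rewrite -a_xy; exact: imset_f.
move: (sq_const z); rewrite wz0 expr0n /= => /esym/eqP.
by rewrite expf_eq0 (negbTE wx_neq0) andbF.
Qed.

End EdgeSquareGraph.

Theorem theorem6p3 (F : fieldType) (T : finType) (e : rel T) :
  (2%N \notin [pchar F]) ->
  simple_graph e -> (0 < #|T|)%N -> gconnected e -> edge_square F e ->
  (#|edges e| = #|T|.-1 \/ #|edges e| = #|T|) /\
  (#|edges e| = #|T|.-1 ->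
     [/\ nalg_iso (NG F e) (dsum (F0 F) (Oalg F #|T|.-1)),
         has_dim (ann F e) 1 & is_tree e]) /\
  (#|edges e| = #|T| ->
     [/\ nalg_iso (NG F e) (Oalg F #|T|),
         has_dim (ann F e) 0,
         unicyclic e &
         exists c, is_cycle e c /\ odd (size c)]).
Proof.
move=> char_F [irr_e sym_e] T_gt0 e_conn e_sq.
have two_neq0 : (2%:R : F) != 0 by rewrite natf_neq0_pchar pnatE // inE.
have [x0 _] := card_gt0P T_gt0.
have M_full := incidence_row_full irr_e sym_e e_sq.
have mulE := @gmulE F _ _ irr_e sym_e.
have ann_ker := has_dim_kermx (fun u => ann_incidence irr_e sym_e u M_full).
have rank_ker : \rank (kermx (incidence F e)) = (#|T| - #|edges e|)%N.
  by rewrite mxrank_ker (eqP M_full).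
have := rank_kermx_incidence F irr_e e_conn; rewrite rank_ker => ker_le1.
have q_le_p : (#|edges e| <= #|T|)%N by rewrite -(eqP M_full) rank_leq_row.
split; first lia.
split => q_eq.
  have ker1 : \rank (kermx (incidence F e)) = 1%N by rewrite rank_ker q_eq; lia.
  split.
  - by apply: nalg_iso_F0_Oalg M_full mulE; lia.
  - by rewrite -ker1; exact: ann_ker.
  - split=> // c /(kermx_incidence_cycle irr_e sym_e e_sq two_neq0 e_conn) ker0.
    by move: ker1; rewrite ker0 mxrank0.
have ker0 : kermx (incidence F e) = 0.
  by apply/eqP; rewrite -mxrank_eq0 rank_ker q_eq subnn.
have [c [c_cycle c_odd]] := odd_cycle_of_kermx_incidence irr_e sym_e x0 e_conn ker0.
split.
- exact: nalg_iso_Oalg M_full mulE.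
- by move: ann_ker; rewrite ker0 mxrank0.
- split=> //; exists c; split=> // c' c'_cycle; apply/eqP.
  by rewrite eqEsubset !(cycle_edges_sub irr_e sym_e e_sq two_neq0 e_conn).
- by exists c.
Qed.
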